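(* Let $\Pi=(P,\mathcal{L})$ and $\Pi'=(P',\mathcal{L}')$ be $n$-dimensional linear spaces, $n\ge 4$, both satisfying the exchange axiom and the axiom (P2). If $f:\mathcal{L}\to\mathcal{L}'$ is an injection sending every base subset of $\mathcal{G}_1(\Pi)=\mathcal{L}$ to a base subset of $\mathcal{G}_1(\Pi')=\mathcal{L}'$, then there is a strong embedding $g$ of $\Pi$ to $\Pi'$ such that $f(L)=\overline{g(L)}$ for every line $L\in\mathcal{L}$.
   Context: A linear space $\Pi=(P,\mathcal{L})$ is a set $P$ of points with a family $\mathcal{L}$ of proper subsets (lines) such that each line has at least two points and any two distinct points $p,q$ lie on exactly one line $pq$. Points are collinear if some line contains them. A subspace is a set $S\subset P$ with $pq\subset S$ for all distinct $p,q\in S$; $\overline{X}$ is the smallest subspace containing $X$. A set $X$ is independent if $\overline{X}$ is not spanned by a proper subset of $X$; a base of a subspace $S$ is an independent set spanning $S$. A subspace is $m$-dimensional if $m+1$ is the smallest number of points spanning it. Exchange axiom: for every $X\subset P$ and $p_1,p_2\in P\setminus\overline{X}$, $p_2\in\overline{X\cup\{p_1\}}$ implies $p_1\in\overline{X\cup\{p_2\}}$. Axiom (P2): every line contains at least three points. $\mathcal{G}_k(\Pi)$ is the set of $k$-dimensional subspaces. For a base $B$ of $\Pi$, the base subset of $\mathcal{G}_k(\Pi)$ associated with $B$ is the set of all $k$-dimensional subspaces spanned by points of $B$. A strong embedding of $\Pi$ to $\Pi'$ is an injection $g:P\to P'$ sending collinear triples to collinear triples, non-collinear triples to non-collinear triples,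 and independent sets to independent sets. *)

From mathcomp Require Import all_boot.
From mathcomp Require Import classical_sets.
From Stdlib Require List.

Set Implicit Arguments.
Unset Strict Implicit.
Unset Printing Implicit Defensive.
Local Open Scope classical_set_scope.

Section LinearSpaces.
Variable P : Type.
Variable Lines : set (set P).

Definition is_linear_space : Prop :=
  (forall l, Lines l -> l <> setT) /\
  (forall l, Lines l -> exists p q, p <> q /\ l p /\ l q) /\
  (forall p q, p <> q -> exists! l, Lines l /\ l p /\ l q).

Definition collinear (p q r : P) : Prop :=
  exists l, Lines l /\ l p /\ l q /\ l r.

Definition subspace (S : set P) : Prop :=
  forall p q, S p -> S q -> p <> q ->
    forall l, Lines l -> l p -> l q -> l `<=` S.

Definition lclosure (X : set P) : set P :=
  [set x | forall S, subspace S -> X `<=` S -> S x].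

Definition independent (X : set P) : Prop :=
  forall Y, Y `<=` X -> Y <> X -> lclosure Y <> lclosure X.

Definition base_of (S B : set P) : Prop := independent B /\ lclosure B = S.

Definition spanned_by_k (S : set P) (k : nat) : Prop :=
  exists s : list P, List.NoDup s /\ List.length s = k /\ lclosure [set x | List.In x s] = S.

Definition dimension (S : set P) (m : nat) : Prop :=
  subspace S /\ spanned_by_k S m.+1 /\ (forall k, (k < m.+1)%N -> ~ spanned_by_k S k).

Definition Grass (k : nat) : set (set P) := [set S | dimension S k].

Definition exchange_axiom : Prop :=
  forall (X : set P) (p1 p2 : P), ~ lclosure X p1 -> ~ lclosure X p2 ->
    lclosure (X `|` [set p1]) p2 -> lclosure (X `|` [set p2]) p1.

Definition axiom_P2 : Prop :=
  forall l, Lines l -> exists p q r, l p /\ l q /\ l r /\ p <> q /\ p <> r /\ q <> r.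

Definition base_subset (k : nat) (B : set P) : set (set P) :=
  [set S | Grass k S /\ exists X, X `<=` B /\ lclosure X = S].

Definition is_base_subset (k : nat) (A : set (set P)) : Prop :=
  exists B, base_of setT B /\ A = base_subset k B.

End LinearSpaces.

Definition strong_embedding (P P' : Type) (L : set (set P)) (L' : set (set P'))
  (g : P -> P') : Prop :=
  [/\ (forall x y, g x = g y -> x = y),
      (forall p q r, collinear L p q r -> collinear L' (g p) (g q) (g r)),
      (forall p q r, ~ collinear L p q r -> ~ collinear L' (g p) (g q) (g r)) &
      (forall X, independent L X -> independent L' (g @` X))].

(** The base subset of G_1 associated with a base B consists of the lines
   joining two points of B; two of them can only meet in a point of B, and
   exactly n of them pass through each point of B.  Let f map the base subset
   of B onto that of B' and let p, p1 be in B.  Exchanging p for a third point q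
   of the line p p1 (axiom (P2)) gives a base whose image base misses some
   beta in B'.  At most one line beta u (u in B') lies in that image base, so
   at least n - 1 of these lines are images of lines of B which are not lines
   of the exchanged base, i.e. of the n - 1 lines p x with x <> p1: all f(p x)
   pass through beta.  Two choices of p1 cover every x <> p, and covering
   every line through p by independent sets shows that all lines f(l) with
   p in l share a point g(p).  Counting lines through g(p) once more, g maps
   every base injectively into an image base, which yields f(l) = <g(l)> and
   the properties of a strong embedding. *)

From mathcomp Require Import all_boot.
From mathcomp Require Import boolp classical_sets.
From Stdlib Require Import Lia.
From Stdlib Require List.

Set Implicit Arguments.
Unset Strict Implicit.
Unset Printing Implicit Defensive.
Local Open Scope classical_set_scope.

Section ListCounting.
Variables (A B : Type) (R : A -> B -> Prop).

Lemma NoDup_rel_length_le (l1 : list A) (l2 : list B) :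
  List.NoDup l1 ->
  (forall a, List.In a l1 -> exists b, List.In b l2 /\ R a b) ->
  (forall a a' b, List.In a l1 -> List.In a' l1 -> R a b -> R a' b -> a = a') ->
  (length l1 <= length l2)%coq_nat.
Proof.
elim: l1 l2 => [|a l1 IH] l2 nd hm hi /=; first lia.
have [na nd1] := proj1 (List.NoDup_cons_iff a l1) nd.
have [b [inb rab]] := hm a (or_introl erefl).
have [m1 [m2 e]] := List.in_split b l2 inb.
suff : (length l1 <= length (m1 ++ m2))%coq_nat.
  by rewrite e !List.length_app /=; lia.
apply: IH => // [a' ina'|x y z ix iy]; last exact: hi (or_intror ix) (or_intror iy).
have [b' [inb' rb']] := hm a' (or_intror ina').
exists b'; split => //.
have nb : b' <> b.
  by move=> eb; subst b'; move: na; rewrite (hi a a' b) ?rab //; [left|right].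
by move: inb'; rewrite e !List.in_app_iff /= => -[|[/esym/nb[]|]]; auto.
Qed.

Lemma NoDup_rel_surj (l1 : list A) (l2 : list B) :
  List.NoDup l1 -> (length l2 <= length l1)%coq_nat ->
  (forall a, List.In a l1 -> exists b, List.In b l2 /\ R a b) ->
  (forall a a' b, List.In a l1 -> List.In a' l1 -> R a b -> R a' b -> a = a') ->
  forall b, List.In b l2 -> exists a, List.In a l1 /\ R a b.
Proof.
move=> nd hl hm hi b inb; apply: contrapT => hn.
have [m1 [m2 e]] := List.in_split b l2 inb.
suff : (length l1 <= length (m1 ++ m2))%coq_nat.
  by move: hl; rewrite e !List.length_app /=; lia.
apply: NoDup_rel_length_le => // a ina.
have [b' [inb' rb']] := hm a ina.
exists b'; split => //.
have nb : b' <> b by move=> eb; subst b'; apply: hn; exists a.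
by move: inb'; rewrite e !List.in_app_iff /= => -[|[/esym/nb[]|]]; auto.
Qed.

End ListCounting.

Lemma NoDup_remove_one (T : Type) (l : list T) a : List.NoDup l -> List.In a l ->
  exists l', [/\ List.NoDup l', length l = S (length l') &
    forall x, List.In x l' <-> List.In x l /\ x <> a].
Proof.
move=> nd ina; have [l1 [l2 e]] := List.in_split a l ina; subst l.
exists (l1 ++ l2); split; first exact: List.NoDup_remove_1 nd.
  by rewrite !List.length_app /=; lia.
have na := List.NoDup_remove_2 _ _ _ nd.
move=> x; rewrite !List.in_app_iff /=; split.
  by move=> h; split; [tauto|move=> ex; subst x; rewrite List.in_app_iff in na].
by case=> -[|[<-|]] nx; [left|case: nx|right].
Qed.

Lemma NoDup_remove_at_most_one (T : Type) (Q : T -> Prop) (m : list T) : List.NoDup m ->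
  (forall u u', List.In u m -> List.In u' m -> Q u -> Q u' -> u = u') ->
  exists G, [/\ List.NoDup G, (length m <= S (length G))%coq_nat &
    forall u, List.In u G <-> List.In u m /\ ~ Q u].
Proof.
move=> nd hQ; case: (EM (exists2 u0, List.In u0 m & Q u0)) => [[u0 iu0 Qu0]|hn].
  have [G [ndG lG hG]] := NoDup_remove_one nd iu0.
  exists G; split => [//||u]; first lia.
  rewrite hG; split=> [[iu nu]|[iu nQ]]; last by split=> // eu; apply: nQ; rewrite eu.
  by split=> // Qu; apply: nu; exact: hQ.
exists m; split => [//||u]; first lia.
by split=> [iu|[]//]; split=> // Qu; apply: hn; exists u.
Qed.

Lemma NoDup_exists_notin (T : Type) (l xs : list T) : List.NoDup l ->
  (length xs < length l)%coq_nat -> exists y, List.In y l /\ ~ List.In y xs.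
Proof.
move=> nd hl; apply: contrapT => hn.
have : (length l <= length xs)%coq_nat.
  apply: (List.NoDup_incl_length nd) => y iny.
  by apply: contrapT => ny; apply: hn; exists y.
lia.
Qed.

Lemma NoDup_two_others (T : Type) (l : list T) p : List.NoDup l -> List.In p l ->
  (3 <= length l)%coq_nat -> exists x y, [/\ List.In x l, List.In y l, x <> p, y <> p & x <> y].
Proof.
move=> nd inp hl; have [[|x [|y c]] [ndc lc hc]] := NoDup_remove_one nd inp;
  try by move: hl; rewrite lc /=; lia.
have [/hc [ix xp] /hc [iy yp]] : List.In x [:: x, y & c] /\ List.In y [:: x, y & c].
  by rewrite /=; tauto.
exists x, y; split => // exy; subst y.
by move/List.NoDup_cons_iff: ndc => [+ _]; apply; left.
Qed.

Lemma NoDup4 (T : Type) (a1 a2 a3 a4 : T) l : List.NoDup [:: a1, a2, a3, a4 & l] ->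
  [/\ a1 <> a2, a1 <> a3, a1 <> a4 & [/\ a2 <> a3, a2 <> a4 & a3 <> a4]].
Proof.
move=> /List.NoDup_cons_iff [n1 /List.NoDup_cons_iff [n2 /List.NoDup_cons_iff [n3 _]]].
by move: n1 n2 n3 => /=; do ![split|move=> e; subst; tauto].
Qed.

Definition lset (T : Type) (l : list T) : set T := [set x | List.In x l].

Lemma lset_cons (T : Type) (a : T) (l : list T) : lset (a :: l) = lset l `|` [set a].
Proof.
by apply/seteqP; split => x; rewrite /lset /= => -[]; do ?[by left|by right].
Qed.

Lemma NoDup_in_set_or_cover (T : Type) (B : set T) k :
  (exists l : list T, [/\ List.NoDup l, lset l `<=` B & length l = k]) \/
  (exists l : list T, [/\ List.NoDup l, lset l `<=` B & B `<=` lset l]).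
Proof.
elim: k => [|k [[l [nd lB e]]|]]; [by left; exists nil; split => //; constructor| |by right].
case: (EM (B `<=` lset l)) => [h|h]; first by right; exists l.
have [x Bx nx] : exists2 x, B x & ~ lset l x.
  apply: contrapT => hn; apply: h => x Bx; apply: contrapT => nx; apply: hn; by exists x.
left; exists (x :: l); split; [by constructor| |by rewrite /= e].
by move=> y [<-|/lB].
Qed.

Section Closure.
Variables (P : Type) (L : set (set P)).
Local Notation cl := (lclosure L).

Lemma lclosure_ext X : X `<=` cl X.
Proof. by move=> x Xx S _ XS; exact: XS. Qed.

Lemma lclosure_min S X : subspace L S -> X `<=` S -> cl X `<=` S.
Proof. by move=> sS XS x; apply. Qed.

Lemma subspace_lclosure X : subspace L (cl X).
Proof.
move=> p q clp clq pq l Ll lp lq x lx S sS XS.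
exact: (sS p q (clp S sS XS) (clq S sS XS) pq l Ll lp lq x lx).
Qed.

Lemma lclosure_sub X Y : X `<=` cl Y -> cl X `<=` cl Y.
Proof. by move=> h; apply: lclosure_min => //; exact: subspace_lclosure. Qed.

Lemma lclosureS X Y : X `<=` Y -> cl X `<=` cl Y.
Proof. by move=> h; apply: lclosure_sub => x /h; exact: lclosure_ext. Qed.

Lemma lclosure_subsingleton X : (forall p q, X p -> X q -> p = q) -> cl X `<=` X.
Proof. by move=> h; apply: lclosure_min => // p q Xp Xq pq; case: pq; exact: h. Qed.

Lemma notin_lclosure_neq X x a : ~ cl X x -> X a -> x <> a.
Proof. by move=> nx Xa e; apply: nx; rewrite e; exact: lclosure_ext. Qed.

Lemma lclosure_nil (a : P) : ~ cl (lset nil) a.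
Proof. by move/(lclosure_subsingleton (X := lset nil)); apply=> ? ? []. Qed.

Lemma lclosure1 (p x : P) : cl (lset [:: p]) x -> x = p.
Proof.
have hs : forall u v, lset [:: p] u -> lset [:: p] v -> u = v.
  by move=> u v [<-|[]] [<-|[]].
by move/(lclosure_subsingleton hs) => [].
Qed.

Lemma independentP X : independent L X <-> (forall x, X x -> ~ cl (X `\ x) x).
Proof.
split=> [hi x Xx hx|h Y YX nYX e].
  apply: (hi (X `\ x)) => [y []//| e |].
    by have [_ /(_ erefl)] : (X `\ x) x by rewrite e.
  apply/seteqP; split; first by apply: lclosureS => y [].
  apply: lclosure_sub => y Xy.
  by case: (EM (y = x)) => [->//|nyx]; apply: lclosure_ext.
have [x [Xx nYx]] : exists x, X x /\ ~ Y x.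
  apply: contrapT => hn; apply: nYX; apply/seteqP; split => // y Xy.
  by apply: contrapT => nY; apply: hn; exists y.
apply: (h x Xx).
have : cl X x by exact: lclosure_ext.
rewrite -e; apply: lclosureS => y Yy; split; first exact: YX.
by move=> /= eyx; subst y.
Qed.

Lemma independentS X Y : Y `<=` X -> independent L X -> independent L Y.
Proof.
move=> YX /independentP hX; apply/independentP => y Yy hy.
by apply: (hX y (YX y Yy)); move: hy; apply: lclosureS => z [/YX].
Qed.

Lemma independent_nil : independent L (lset (@nil P)).
Proof. by apply/independentP => x []. Qed.

End Closure.

Section Lines.
Variables (P : Type) (L : set (set P)).
Hypothesis HL : is_linear_space L.
Local Notation cl := (lclosure L).

Definition join (u v : P) : set P := cl (lset [:: u; v]).

Lemma join_l u v : join u v u.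
Proof. by apply: lclosure_ext; left. Qed.

Lemma join_r u v : join u v v.
Proof. by apply: lclosure_ext; right; left. Qed.

Arguments join_l : clear implicits.
Arguments join_r : clear implicits.

Lemma joinC u v : join u v = join v u.
Proof. by rewrite /join; congr lclosure; apply/seteqP; split => x; rewrite /lset /=; tauto. Qed.

Lemma join_sub u v X : cl X u -> cl X v -> join u v `<=` cl X.
Proof. by move=> Xu Xv; apply: lclosure_sub => x [<-|[<-|[]]]. Qed.

Lemma join_subset u v X : X u -> X v -> join u v `<=` cl X.
Proof. by move=> Xu Xv; apply: join_sub; apply: lclosure_ext. Qed.

Lemma line_eq l1 l2 p q : L l1 -> L l2 -> p <> q ->
  l1 p -> l1 q -> l2 p -> l2 q -> l1 = l2.
Proof.
move=> L1 L2 pq l1p l1q l2p l2q; have [l [_ hu]] := HL.2.2 p q pq.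
by rewrite -(hu l1) ?(hu l2).
Qed.

Lemma subspace_line l : L l -> subspace L l.
Proof.
move=> Ll p q lp lq pq l' Ll' l'p l'q.
by rewrite (line_eq Ll' Ll pq l'p l'q lp lq).
Qed.

Lemma line_join l u v : L l -> u <> v -> l u -> l v -> join u v = l.
Proof.
move=> Ll uv lu lv; apply/seteqP; split.
  by apply: lclosure_min; [exact: subspace_line | move=> x [<-|[<-|[]]]].
exact: (subspace_lclosure (X := lset [:: u; v]) (join_l u v) (join_r u v) uv Ll lu lv).
Qed.

Lemma join_line u v : u <> v -> L (join u v).
Proof.
move=> uv; have [l [[Ll [lu lv]] _]] := HL.2.2 u v uv.
by rewrite (line_join Ll uv lu lv).
Qed.

Lemma line_other_point l a : L l -> l a -> exists2 z, l z & z <> a.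
Proof.
move=> Ll la; have [p [q [pq [lp lq]]]] := HL.2.1 l Ll.
by case: (EM (p = a)) => [<-|pa]; [exists q => // /esym|exists p].
Qed.

Lemma line_third_point l a b : axiom_P2 L -> L l -> exists q, [/\ l q, q <> a & q <> b].
Proof.
move=> HP2 Ll; have [p [q [r [lp [lq [lr [pq [pr qr]]]]]]]] := HP2 l Ll.
case: (EM (p <> a /\ p <> b)) => [[]|hp]; first by exists p.
case: (EM (q <> a /\ q <> b)) => [[]|hq]; first by exists q.
by exists r; split=> // er; subst r; apply: hq; split=> eq; subst q;
  apply: hp; split=> ep; subst p; tauto.
Qed.

End Lines.

Arguments join_l {P} L u v.
Arguments join_r {P} L u v.

Section Exchange.
Variables (P : Type) (L : set (set P)).
Hypothesis EX : exchange_axiom L.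
Local Notation cl := (lclosure L).

Lemma independent_add X p : independent L X -> ~ cl X p -> independent L (X `|` [set p]).
Proof.
move=> /independentP hX np; apply/independentP => z Xz hz.
case: (EM (z = p)) => [ezp|nzp].
  by subst z; apply: np; move: hz; apply: lclosureS => y [[//|->]] [].
have {}Xz : X z by case: Xz.
have nz : ~ cl (X `\ z) z by exact: hX.
have npz : ~ cl (X `\ z) p by move=> h; apply: np; move: h; apply: lclosureS => y [].
have hzp : cl ((X `\ z) `|` [set p]) z.
  by move: hz; apply: lclosureS => y [[Xy|->] nyz]; [left|right].
apply: np; move: (EX npz nz hzp); apply: lclosureS => y [[]//|->//].
Qed.

Lemma independent_cons (l : list P) a :
  independent L (lset l) -> ~ cl (lset l) a -> independent L (lset (a :: l)).
Proof. by rewrite lset_cons; exact: independent_add. Qed.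

Lemma independent2 (p x : P) : x <> p -> independent L (lset [:: x; p]).
Proof.
move=> xp; apply: independent_cons; last by move=> h; apply: xp; exact: lclosure1 h.
by apply: independent_cons; [exact: independent_nil | exact: lclosure_nil].
Qed.

Lemma base_exchange B p q : base_of L setT B -> B p -> ~ cl (B `\ p) q ->
  base_of L setT ((B `\ p) `|` [set q]).
Proof.
move=> [hB spanB] Bp hq; split.
  by apply: independent_add => //; apply: independentS hB => x [].
apply/seteqP; split => // x _.
have XpB : (B `\ p) `|` [set p] = B.
  apply/seteqP; split=> y; first by case=> [[]//|->].
  by case: (EM (y = p)) => [->|yp By]; [right|left].
have hp : cl ((B `\ p) `|` [set q]) p.
  apply: (EX _ hq); first by move/independentP: hB; apply.
  by rewrite XpB spanB.
have : cl B x by rewrite spanB.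
apply: lclosure_sub => y By; case: (EM (y = p)) => [->//|yp].
by apply: lclosure_ext; left.
Qed.

(* The points of [l] exchanged against points of [t] are moved into [X];
   this generality is what makes the induction on [t] work. *)
Lemma steinitz_exchange (t : list P) : forall (X : set P) (l : list P),
  List.NoDup l -> independent L (X `|` lset l) -> (forall x, List.In x l -> ~ X x) ->
  (forall x, List.In x l -> cl (X `|` lset t) x) -> (length l <= length t)%coq_nat.
Proof.
elim: t => [|a t IH] X l nd hi hX hc.
  case: l nd hi hX hc => [|y l] nd /independentP hi hX hc /=; first lia.
  exfalso; apply: (hi y); first by right; left.
  move: (hc y (or_introl erefl)); apply: lclosureS => x [Xx|[]]; split; first by left.
  by move=> /= exy; subst x; apply: (hX y (or_introl erefl)).
case: (EM (cl (X `|` lset t) a)) => [ha|ha].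
  suff : (length l <= length t)%coq_nat by rewrite /=; lia.
  apply: IH nd hi hX _ => x /hc; apply: lclosure_sub => y [Xy|[<-|yt]] //.
    by apply: lclosure_ext; left.
  by apply: lclosure_ext; right.
case: (EM (exists2 y, List.In y l & ~ cl (X `|` lset t) y)) => [[y iny ny]|hn]; last first.
  suff : (length l <= length t)%coq_nat by rewrite /=; lia.
  apply: IH nd hi hX _ => x inx; apply: contrapT => nx; apply: hn; by exists x.
have hy : cl ((X `|` lset t) `|` [set a]) y.
  by move: (hc y iny); apply: lclosureS => z [Xz|[<-|zt]]; [left; left|right|left; right].
have hxa := EX ha ny hy.
have [l' [nd' el hl']] := NoDup_remove_one nd iny.
suff : (length l' <= length t)%coq_nat by rewrite el /=; lia.
apply: (IH (X `|` [set y]) l' nd').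
- apply: independentS hi => z [[Xz|->]|/hl' [zl _]]; [by left|by right|by right].
- by move=> x /hl' [inx nxy] [Xx|exy]; [exact: (hX x inx Xx)|exact: nxy].
- move=> x /hl' [/hc + _]; apply: lclosure_sub => z [Xz|[<-|zt]].
  + by apply: lclosure_ext; left; left.
  + by move: hxa; apply: lclosureS => w [[Xw|wt]|->]; [left; left|right|left; right].
  + by apply: lclosure_ext; right.
Qed.

Lemma independent_length_le l t : List.NoDup l -> independent L (lset l) ->
  lset l `<=` cl (lset t) -> (length l <= length t)%coq_nat.
Proof.
move=> nd hi hs; apply: (@steinitz_exchange t set0 l) => //.
- by rewrite set0U.
- by move=> x _ [].
- by move=> x inx; rewrite set0U; exact: hs.
Qed.

Lemma independent_extend (s : list P) X : independent L X ->
  exists Y, [/\ X `<=` Y, independent L Y & lset s `<=` cl Y].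
Proof.
elim: s X => [|a s IH] X hX; first by exists X; split => // x [].
case: (EM (cl X a)) => [ha|ha].
  have [Y [XY hY hs]] := IH X hX.
  by exists Y; split => // x [<-|xs]; [exact: (lclosureS XY) | exact: hs].
have [Y [XY hY hs]] := IH _ (independent_add hX ha).
exists Y; split => [x Xx||x [<-|xs]]; [by apply: XY; left|done| |exact: hs].
by apply: lclosure_ext; apply: XY; right.
Qed.

End Exchange.

Section Dimension.
Variables (P : Type) (L : set (set P)) (n : nat).
Hypotheses (EX : exchange_axiom L) (Hdim : dimension L setT n).
Local Notation cl := (lclosure L).

Definition list_base (b : list P) :=
  [/\ List.NoDup b, length b = n.+1 & base_of L setT (lset b)].

Lemma list_base_independent b : list_base b -> independent L (lset b).
Proof. by case=> _ _ []. Qed.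

Lemma lclosure_short_neq_setT t : (length t <= n)%coq_nat -> cl (lset t) <> setT.
Proof.
move=> hl e; pose t' := List.nodup (fun x y : P => pselect (x = y)) t.
have lt' : (length t' <= length t)%coq_nat.
  by apply: (List.NoDup_incl_length (List.NoDup_nodup _ t)) => x; rewrite List.nodup_In.
apply: (Hdim.2.2 (length t')); first by apply/ltP; lia.
exists t'; split; first exact: List.NoDup_nodup.
split => //.
rewrite -e; congr lclosure; apply/seteqP; split => x; rewrite /lset /= List.nodup_In //.
Qed.

Lemma exists_notin_lclosure t : (length t <= n)%coq_nat -> exists x, ~ cl (lset t) x.
Proof.
move=> /lclosure_short_neq_setT ht; apply: contrapT => hn; apply: ht.
by apply/seteqP; split => // x _; apply: contrapT => nx; apply: hn; exists x.
Qed.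

Lemma independent_sub_base X : independent L X -> exists2 Y, X `<=` Y & base_of L setT Y.
Proof.
move=> hX; have [s [_ [_ hs]]] := Hdim.2.1.
have [Y [XY hY hsY]] := independent_extend EX s hX.
exists Y => //; split => //; apply/seteqP; split => // x _.
have : cl (lset s) x by rewrite /lset hs.
exact: lclosure_sub hsY x.
Qed.

Lemma base_list_length_le B l : base_of L setT B -> List.NoDup l -> lset l `<=` B ->
  (length l <= n.+1)%coq_nat.
Proof.
move=> [hB _] nd lB; have [s [nds [<- hs]]] := Hdim.2.1.
by apply: (independent_length_le EX nd (independentS lB hB)) => x _; rewrite /lset hs.
Qed.

Lemma list_base_of_base B : base_of L setT B -> exists2 b, list_base b & B = lset b.
Proof.
move=> hB; have [[l [nd lB e]]|[l [nd lB Bl]]] := NoDup_in_set_or_cover B n.+2.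
  by have := base_list_length_le hB nd lB; lia.
have eB : B = lset l by apply/seteqP; split.
exists l => //; split => //; last by rewrite -eB.
have := base_list_length_le hB nd lB.
suff : ~ (length l <= n)%coq_nat by lia.
by move=> /lclosure_short_neq_setT; rewrite -eB; case: hB.
Qed.

End Dimension.

Section BaseLines.
Variables (P : Type) (L : set (set P)).
Hypothesis HL : is_linear_space L.
Local Notation cl := (lclosure L).
Local Notation join := (join L).

Lemma join_notin_lclosure X p x q : ~ cl X p -> cl X x -> join p x q -> q <> x -> ~ cl X q.
Proof.
move=> np Xx hq qx Xq; have px : p <> x by move=> e; apply: np; rewrite e.
have e : join q x = join p x.
  by apply: (line_join HL (join_line HL px)) => //; exact: join_r.
by apply: np; apply: (join_sub Xq Xx); rewrite e; exact: join_l.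
Qed.

Section Independent.
Variable B : set P.
Hypothesis hB : independent L B.

Lemma independent_join_mem u v c : B u -> B v -> B c -> join u v c -> c = u \/ c = v.
Proof.
move: hB => /independentP hB' Bu Bv Bc hc; apply: contrapT => /not_orP [cu cv].
by apply: (hB' c Bc); move: hc; apply: lclosureS => x [<-|[<-|[]]]; split => // /esym.
Qed.

Lemma independent_join_inj u v w z : B u -> B v -> B w -> B z -> w <> z ->
  join u v = join w z -> (w = u /\ z = v) \/ (w = v /\ z = u).
Proof.
move=> Bu Bv Bw Bz wz e.
have hw : join u v w by rewrite e; exact: join_l.
have hz : join u v z by rewrite e; exact: join_r.
by case: (independent_join_mem Bu Bv Bw hw) => ew; case: (independent_join_mem Bu Bv Bz hz) => ez;
  subst w z; auto.
Qed.

Lemma independent_join_neq u v w : B u -> B v -> B w -> u <> v -> u <> w -> v <> w ->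
  join u v <> join u w.
Proof.
move=> Bu Bv Bw uv uw vw e.
by case: (independent_join_inj Bu Bv Bu Bw uw e) => -[euv ewv]; [apply: vw|apply: uv].
Qed.

Lemma independent_joins_meet u v w z r : B u -> B v -> B w -> B z -> u <> v -> w <> z ->
  join u v <> join w z -> join u v r -> join w z r -> B r.
Proof.
move=> Bu Bv Bw Bz uv wz ne r1 r2; apply: contrapT => nr.
have nBr x : B x -> x <> r by move=> Bx e; apply nr; rewrite -e.
case: (EM (z = u \/ z = v)) => [zuv|/not_orP [zu zv]].
  apply: ne; apply: (line_eq HL (join_line HL uv) (join_line HL wz) (nBr z Bz)) => //.
    by case: zuv => ->; [exact: join_l|exact: join_r].
  exact: join_r.
(* Now [z] is off the line [u v], so [w] and [r] lie in the closure of
   [B `\ z], and so does [z], which is on the line [w r]. *)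
have Bzz : ~ cl (B `\ z) z by move/independentP: hB; apply.
have wr : w <> r := nBr w Bw.
have e : join w r = join w z.
  by apply: (line_join HL (join_line HL wz)) => //; exact: join_l.
apply: Bzz; apply: (join_sub (u := w) (v := r)); last by rewrite e; exact: join_r.
- by apply: lclosure_ext; split => // /esym.
- by move: r1; apply: join_subset; split => // /esym.
Qed.

Lemma independent_noncollinear u v w : B u -> B v -> B w -> u <> v -> w <> u -> w <> v ->
  ~ collinear L u v w.
Proof.
move=> Bu Bv Bw uv wu wv [l [Ll [lu [lv lw]]]].
have : join u v w by rewrite (line_join HL Ll uv lu lv).
by case/(independent_join_mem Bu Bv Bw).
Qed.

Lemma independent_join_through u v c : B u -> B v -> B c -> u <> v -> join u v c ->
  exists x, [/\ B x, x <> c & join u v = join c x].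
Proof.
move=> Bu Bv Bc uv /(independent_join_mem Bu Bv Bc) [->|->].
  by exists v; split => // /esym.
by exists u; split => //; exact: joinC.
Qed.

End Independent.

Lemma join_dimension1 u v : u <> v -> dimension L (join u v) 1.
Proof.
move=> uv; split; first exact: subspace_lclosure.
split.
  exists [:: u; v]; split => //.
  by constructor; [case=> // /esym|constructor; [case|constructor]].
move=> k /ltP hk [[|a [|b s]] [nds [/= hl hs]]]; try lia.
  by apply: (lclosure_nil (L := L) (a := u)); rewrite /lset hs; exact: join_l.
have hsub : join u v `<=` lset [:: a].
  by rewrite -hs; apply: lclosure_subsingleton => x y [<-|[]] [<-|[]].
have [eu|[]] := hsub u (join_l L u v); have [ev|[]] := hsub v (join_r L u v).
by apply: uv; rewrite -eu -ev.
Qed.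

Lemma line_spanned_join S X : L S -> cl X = S -> exists u v, [/\ X u, X v, u <> v & S = join u v].
Proof.
move=> LS hX; apply: contrapT => hn.
have hs : cl X `<=` X.
  apply: lclosure_subsingleton => p q Xp Xq; apply: contrapT => pq.
  apply: hn; exists p, q; split => //.
  by rewrite (line_join HL LS pq) // -hX; apply: lclosure_ext.
have [p [q [pq [Sp Sq]]]] := HL.2.1 S LS.
apply: hn; exists p, q; split => //; [apply: hs; rewrite hX // ..|].
by rewrite (line_join HL LS pq).
Qed.

Lemma dimension1_line S : dimension L S 1 -> L S.
Proof.
move=> [_ [[[|x [|y [|? ?]]] [nd [//= _ <-]]] _]].
by apply: (join_line HL); move/List.NoDup_cons_iff: nd => [+ _] exy; apply; left.
Qed.

Lemma base_subset1P B S : independent L B ->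
  base_subset L 1 B S <-> exists u v, [/\ B u, B v, u <> v & S = join u v].
Proof.
move=> hB; split.
  move=> [hS [X [XB hX]]]; have LS := dimension1_line hS.
  have [u [v [Xu Xv uv ->]]] := line_spanned_join LS hX.
  by exists u, v; split => //; apply: XB.
move=> [u [v [Bu Bv uv ->]]]; split; first exact: join_dimension1.
by exists (lset [:: u; v]); split => // x [<-|[<-|[]]].
Qed.

End BaseLines.

Section BaseSubsetMap.
Variables (P P' : Type) (L : set (set P)) (L' : set (set P')) (n : nat) (f : set P -> set P').
Hypotheses (HL : is_linear_space L) (HL' : is_linear_space L') (n4 : (4 <= n)%N)
  (Hd : dimension L setT n) (Hd' : dimension L' setT n)
  (EX : exchange_axiom L) (EX' : exchange_axiom L') (HP2 : axiom_P2 L)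
  (Hf : forall l, L l -> L' (f l))
  (Hfi : forall l1 l2, L l1 -> L l2 -> f l1 = f l2 -> l1 = l2)
  (Hfb : forall A, is_base_subset L 1 A -> is_base_subset L' 1 (f @` A)).

Local Notation cl := (lclosure L).
Local Notation join' := (join L').
Local Notation join := (join L).
Local Notation A b := (base_subset L 1 (lset b)).
Local Notation A' b' := (base_subset L' 1 (lset b')).

Definition f_maps_base (b : list P) (b' : list P') := f @` A b = A' b'.

Lemma n_ge4 : (4 <= n)%coq_nat. Proof. exact/leP. Qed.

Lemma list_base_image b : list_base L n b -> exists2 b', list_base L' n b' & f_maps_base b b'.
Proof.
move=> [_ _ hB]; have [B' [hB' e]] := Hfb (ex_intro _ (lset b) (conj hB erefl)).
have [b' hb' eB'] := list_base_of_base EX' Hd' hB'.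
by exists b' => //; rewrite /f_maps_base e eB'.
Qed.

Lemma independent_sub_image_base X : independent L X ->
  exists b b', [/\ list_base L n b, X `<=` lset b, list_base L' n b' & f_maps_base b b'].
Proof.
move=> /(independent_sub_base EX Hd) [Y XY /(list_base_of_base EX Hd) [b hb eY]].
by have [b' hb' hc] := list_base_image hb; exists b, b'; split => //; rewrite -eY.
Qed.

Lemma f_join_inj u v w z : u <> v -> w <> z -> f (join u v) = f (join w z) -> join u v = join w z.
Proof. by move=> uv wz; apply: Hfi; apply: (join_line HL). Qed.

Lemma f_joins_meet_uniq X u x y c c' : independent L X -> X u -> X x -> X y ->
  u <> x -> u <> y -> x <> y ->
  f (join u x) c -> f (join u y) c -> f (join u x) c' -> f (join u y) c' -> c = c'.
Proof.
move=> hX Xu Xx Xy ux uy xy cx cy c'x c'y; apply: contrapT => cc'.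
apply: (independent_join_neq hX Xu Xx Xy ux uy xy); apply: f_join_inj => //.
exact: (line_eq HL' (Hf (join_line HL ux)) (Hf (join_line HL uy)) cc').
Qed.

Section CorrespondingBases.
Variables (b : list P) (b' : list P').
Hypotheses (hb : list_base L n b) (hb' : list_base L' n b') (hc : f_maps_base b b').

Let ib : independent L (lset b) := list_base_independent hb.
Let ib' : independent L' (lset b') := list_base_independent hb'.

Lemma f_join_base u v : List.In u b -> List.In v b -> u <> v ->
  exists u' v', [/\ List.In u' b', List.In v' b', u' <> v' & f (join u v) = join' u' v'].
Proof.
move=> inu inv uv.
have : (f @` A b) (f (join u v)).
  by exists (join u v) => //; apply/(base_subset1P HL _ ib); exists u, v.
by rewrite hc => /(base_subset1P HL' _ ib') [u' [v' [iu iv uv' e]]]; exists u', v'.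
Qed.

Lemma join_base_image u' v' : List.In u' b' -> List.In v' b' -> u' <> v' ->
  exists u v, [/\ List.In u b, List.In v b, u <> v & f (join u v) = join' u' v'].
Proof.
move=> inu inv uv.
have : A' b' (join' u' v') by apply/(base_subset1P HL' _ ib'); exists u', v'.
by rewrite -hc => -[_ /(base_subset1P HL _ ib) [u [v [iu iv uv0 ->]]] fl]; exists u, v.
Qed.

(* [q :: c] is the base obtained from [b] by replacing [p] with a third point
   [q] of the line [p p1]; [b''] is its image base. *)
Section ExchangedBase.
Variables (p p1 q : P) (c : list P) (b'' : list P').
Hypotheses (inp : List.In p b) (inp1 : List.In p1 b) (pp1 : p <> p1)
  (qon : join p p1 q) (qp : q <> p) (qp1 : q <> p1)
  (hcm : forall x, List.In x c <-> List.In x b /\ x <> p)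
  (hb2 : list_base L n (q :: c)) (hb'' : list_base L' n b'') (hc2 : f_maps_base (q :: c) b'').

Let ib2 : independent L (lset (q :: c)) := list_base_independent hb2.
Let ib'' : independent L' (lset b'') := list_base_independent hb''.

Lemma exchanged_notin : ~ List.In q b.
Proof. by move=> /(independent_join_mem ib inp inp1)/(_ qon) [/qp|/qp1]. Qed.

Lemma join_exchanged : join q p1 = join p p1.
Proof. by apply: (line_join HL (join_line HL pp1)) => //; exact: join_r. Qed.

Lemma exchanged_join_base u v : List.In u (q :: c) -> List.In v (q :: c) -> u <> v ->
  A (q :: c) (join u v).
Proof. by move=> iu iv uv; apply/(base_subset1P HL _ ib2); exists u, v. Qed.

Lemma exists_point_outside_image : exists2 beta, List.In beta b' & ~ List.In beta b''.
Proof.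
(* Otherwise both image bases coincide, so [f (join q x)] is the image of a
   line of [b] and [q] would be a point of [b]. *)
apply: contrapT => hn.
have [nd' lb' _] := hb'; have [nd'' lb'' _] := hb''.
have sub : List.incl b' b'' by move=> y iy; apply: contrapT => ny; apply: hn; exists y.
have sub' : List.incl b'' b' by apply: List.NoDup_length_incl nd' _ sub; rewrite lb' lb''.
have eA : A' b' = A' b''.
  by congr base_subset; apply/seteqP; split => y; [exact: sub|exact: sub'].
have [ndb lb _] := hb.
have [x [inx nx]] :=
  NoDup_exists_notin (xs := [:: p; p1]) ndb ltac:(rewrite lb /=; have := n_ge4; lia).
have xp : x <> p by move=> e; apply: nx; left.
have xp1 : x <> p1 by move=> e; apply: nx; right; left.
have qx : q <> x by move=> e; apply: exchanged_notin; rewrite e.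
have : (f @` A (q :: c)) (f (join q x)).
  by exists (join q x) => //; apply: exchanged_join_base => //; [left|right; apply/hcm].
rewrite hc2 -eA -hc => -[_ /(base_subset1P HL _ ib) [u [v [iu iv uv ->]]] /(f_join_inj uv qx) e].
apply: exchanged_notin; apply: (independent_joins_meet HL ib inp inp1 iu iv pp1 uv) => //.
- move=> e'; have : join p p1 x by rewrite e' e; exact: join_r.
  by case/(independent_join_mem ib inp inp1 inx).
- by rewrite e; exact: join_l.
Qed.

Lemma join_image_exchanged_uniq beta u u' : List.In beta b' -> ~ List.In beta b'' ->
  List.In u b' -> List.In u' b' -> u <> beta -> u' <> beta ->
  A' b'' (join' beta u) -> A' b'' (join' beta u') -> u = u'.
Proof.
move=> ibeta nbeta iu iu' ub u'b /(base_subset1P HL' _ ib'') [w [z [iw iz wz e1]]]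
  /(base_subset1P HL' _ ib'') [w' [z' [iw' iz' wz' e1']]].
apply: contrapT => uu'; apply: nbeta.
apply: (independent_joins_meet HL' ib'' iw iz iw' iz' wz wz').
- by rewrite -e1 -e1'; exact: (independent_join_neq ib' ibeta iu iu' (nesym ub) (nesym u'b) uu').
- by rewrite -e1; exact: join_l.
- by rewrite -e1'; exact: join_l.
Qed.

Lemma join_outside_exchanged u v : List.In u b -> List.In v b -> u <> v ->
  ~ A (q :: c) (join u v) -> exists x, [/\ List.In x b, x <> p, x <> p1 & join u v = join p x].
Proof.
move=> iu iv uv nA.
have inc x : List.In x b -> x <> p -> List.In x (q :: c) by move=> ix xp; right; apply/hcm.
have through_p x : List.In x b -> x <> p -> join p x <> join p p1 ->
    exists y, [/\ List.In y b, y <> p, y <> p1 & join p x = join p y].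
  by move=> ix xp ne; exists x; split => // e; apply: ne; rewrite e.
have A_pp1 : A (q :: c) (join p p1).
  rewrite -join_exchanged; apply: exchanged_join_base => //; first by left.
  exact: inc _ inp1 (nesym pp1).
case: (EM (u = p)) => [eu|up]; first subst u.
  by apply: through_p => [//|/nesym//|e]; apply: nA; rewrite e.
case: (EM (v = p)) => [ev|vp]; first subst v.
  by rewrite joinC; apply: through_p => // e; apply: nA; rewrite joinC e.
by case: nA; apply: exchanged_join_base => //; exact: inc.
Qed.

Lemma f_joins_concurrent_exchanged beta x : List.In beta b' -> ~ List.In beta b'' ->
  List.In x b -> x <> p -> x <> p1 -> f (join p x) beta.
Proof.
move=> ibeta nbeta ix xp xp1.
have [ndb lb _] := hb; have [ndb' lb' _] := hb'.
have [m [ndm lm hm]] := NoDup_remove_one ndb' ibeta.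
have uniqQ u u' : List.In u m -> List.In u' m ->
    A' b'' (join' beta u) -> A' b'' (join' beta u') -> u = u'.
  by move=> /hm [iu ub] /hm [iu' u'b]; exact: join_image_exchanged_uniq.
(* The lines [join' beta u] with [u] in [G] are images of lines of [b] that are
   not lines of [q :: c], i.e. of lines [join p y] with [y] in [D]; as
   [length D <= length G], every [f (join p y)] is one of them. *)
have [G [ndG lG hG]] := NoDup_remove_at_most_one ndm uniqQ.
have [+ lc _] := hb2; move/List.NoDup_cons_iff => [_ ndc].
have ip1c : List.In p1 c by apply/hcm; split => //; exact: nesym.
have [D [ndD lD hD]] := NoDup_remove_one ndc ip1c.
have hmaps u : List.In u G -> exists y, List.In y D /\ f (join p y) = join' beta u.
  move=> /hG [/hm [iu ub] nQ].
  have [u1 [v1 [iu1 iv1 uv1 e]]] := join_base_image ibeta iu (nesym ub).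
  have nA : ~ A (q :: c) (join u1 v1).
    by move=> h; apply: nQ; rewrite -hc2 -e; exists (join u1 v1).
  have [y [iy yp yp1 ey]] := join_outside_exchanged iu1 iv1 uv1 nA.
  by exists y; rewrite -e ey; split => //; apply/hD; split => //; apply/hcm.
have hinj u u' y : List.In u G -> List.In u' G ->
    f (join p y) = join' beta u -> f (join p y) = join' beta u' -> u = u'.
  move=> /hG [/hm [iu ub] _] /hG [/hm [iu' u'b] _] e1 e2; apply: contrapT => uu'.
  by apply: (independent_join_neq ib' ibeta iu iu' (nesym ub) (nesym u'b) uu'); rewrite -e1 -e2.
have hlen : (length D <= length G)%coq_nat by move: lb lb' lm lG lc lD => /= *; lia.
have xD : List.In x D by apply/hD; split => //; apply/hcm.
have [u [_ ->]] := NoDup_rel_surj ndG hlen hmaps hinj xD.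
exact: join_l.
Qed.

End ExchangedBase.

Lemma f_joins_concurrent_avoiding p p1 : List.In p b -> List.In p1 b -> p <> p1 ->
  exists2 beta, List.In beta b' &
    forall x, List.In x b -> x <> p -> x <> p1 -> f (join p x) beta.
Proof.
move=> inp inp1 pp1.
have [q [qon qp qp1]] := line_third_point p p1 HP2 (join_line HL pp1).
have [ndb lb _] := hb.
have [c [ndc lc hcm]] := NoDup_remove_one ndb inp.
have qnb := exchanged_notin inp inp1 qon qp qp1.
have nq : ~ cl (lset b `\ p) q.
  apply: (join_notin_lclosure HL _ _ qon qp1); first by move/independentP: ib; apply.
  by apply: lclosure_ext; split => // /esym.
have ec : lset (q :: c) = (lset b `\ p) `|` [set q].
  by rewrite lset_cons; congr setU; apply/seteqP; split => y /hcm.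
have hb2 : list_base L n (q :: c).
  split; [by constructor => // /hcm [] | by rewrite /= -lc | rewrite ec].
  by apply: base_exchange => //; case: hb.
have [b'' hb'' hc2] := list_base_image hb2.
have [beta ibeta nbeta] := exists_point_outside_image inp inp1 pp1 qon qp qp1 hcm hb2 hb'' hc2.
by exists beta => // x; apply: (f_joins_concurrent_exchanged inp1 pp1 qon qp1 hcm hb2 hb'' hc2).
Qed.

Lemma f_joins_concurrent p : List.In p b ->
  exists2 beta, List.In beta b' & forall x, List.In x b -> x <> p -> f (join p x) beta.
Proof.
move=> inp; have [ndb lb _] := hb.
have [c [ndc lc hcm]] := NoDup_remove_one ndb inp.
(* Four points of [b] besides [p] are needed: this is where [4 <= n] is used. *)
case: c ndc lc hcm => [|p1 [|p2 [|x1 [|x2 c]]]] ndc lc hcm; try by move: lc n_ge4 => /=; lia.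
have [p12 p1x1 p1x2 [p2x1 p2x2 x12]] := NoDup4 ndc.
have [[ip1 p1p] [ip2 p2p] [ix1 x1p] [ix2 x2p]] :
    [/\ List.In p1 b /\ p1 <> p, List.In p2 b /\ p2 <> p,
        List.In x1 b /\ x1 <> p & List.In x2 b /\ x2 <> p].
  by split; apply/hcm; rewrite /=; tauto.
have [beta1 ib1 h1] := f_joins_concurrent_avoiding inp ip1 (nesym p1p).
have [beta2 ib2 h2] := f_joins_concurrent_avoiding inp ip2 (nesym p2p).
have e12 : beta1 = beta2.
  apply: (f_joins_meet_uniq ib inp ix1 ix2 (nesym x1p) (nesym x2p) x12);
    [apply: h1|apply: h1|apply: h2|apply: h2] => //; exact: nesym.
exists beta1 => // x ix xp; case: (EM (x = p1)) => [->|xp1]; last exact: h1.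
by rewrite e12; apply: h2.
Qed.

End CorrespondingBases.

Lemma exists_line_through a c : exists l, [/\ L l, l a & l c].
Proof.
case: (EM (a = c)) => [<-|ac]; last first.
  by exists (join a c); split; [exact: join_line|exact: join_l|exact: join_r].
have [x hx] := exists_notin_lclosure Hd (t := [:: a]) ltac:(have := n_ge4; simpl; lia).
have xa : x <> a by apply: notin_lclosure_neq hx _; left.
by exists (join x a); split; [exact: join_line|exact: join_r|exact: join_r].
Qed.

Lemma noncollinear_neq p q r : ~ collinear L p q r -> [/\ p <> q, q <> r & p <> r].
Proof.
move=> ncol; split=> e; subst.
- by have [l [Ll lq lr]] := exists_line_through q r; apply: ncol; exists l.
- by have [l [Ll lp lr]] := exists_line_through p r; apply: ncol; exists l.
- by have [l [Ll lp lq]] := exists_line_through r q; apply: ncol; exists l.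
Qed.

Lemma f_joins_common_point X p x y z c : independent L X -> X p -> X x -> X y -> X z ->
  x <> p -> y <> p -> z <> p -> x <> y ->
  f (join p x) c -> f (join p y) c -> f (join p z) c.
Proof.
move=> hX Xp Xx Xy Xz xp yp zp xy cx cy.
have [b [b' [hb Xb hb' hc]]] := independent_sub_image_base hX.
have ib := list_base_independent hb.
have [beta _ hbeta] := f_joins_concurrent hb hb' hc (Xb p Xp).
suff -> : c = beta by apply: hbeta => //; exact: Xb.
by apply: (f_joins_meet_uniq ib (Xb p Xp) (Xb x Xx) (Xb y Xy) (nesym xp) (nesym yp) xy) => //;
  apply: hbeta => //; exact: Xb.
Qed.

Lemma f_star_extend p x y c : independent L (lset [:: y; x; p]) -> x <> p -> y <> p -> y <> x ->
  f (join p x) c -> f (join p y) c -> forall l, L l -> l p -> f l c.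
Proof.
move=> i3 xp yp yx cx cy l Ll lp.
have [z lz zp] := line_other_point HL Ll lp.
rewrite -(line_join HL Ll (nesym zp) lp lz).
case: (EM (cl (lset [:: y; x; p]) z)) => hz; last first.
  by apply: (f_joins_common_point (independent_cons EX i3 hz) _ _ _ _ xp yp zp (nesym yx));
    rewrite /lset /=; tauto.
case: (EM (join x p z)) => hz2.
  rewrite (_ : join p z = join p x) //.
  by apply: (line_join HL (join_line HL (nesym xp))); [exact: nesym|exact: join_l|rewrite joinC].
have [w hw] := exists_notin_lclosure Hd (t := [:: y; x; p]) ltac:(have := n_ge4; simpl; lia).
have [wx wp] : w <> x /\ w <> p by split; apply: notin_lclosure_neq hw _; rewrite /lset /=; tauto.
have i2 : independent L (lset [:: x; p]) by apply: independentS i3 => u /= ?; right.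
have hw' : ~ cl (lset [:: z; x; p]) w.
  by apply: contra_not hw; apply: lclosure_sub => u [<-|/= ?]; last apply: lclosure_ext;
    rewrite /lset /=; tauto.
have i4 := independent_cons EX (independent_cons EX i2 hz2) hw'.
have cw : f (join p w) c.
  by apply: (f_joins_common_point (independent_cons EX i3 hw) _ _ _ _ xp yp wp (nesym yx));
    rewrite /lset /=; tauto.
by apply: (f_joins_common_point i4 _ _ _ _ xp wp zp (nesym wx)); rewrite /lset /=; tauto.
Qed.

Lemma f_star_concurrent p : exists c, forall l, L l -> l p -> f l c.
Proof.
have [x hx] := exists_notin_lclosure Hd (t := [:: p]) ltac:(have := n_ge4; simpl; lia).
have [y hy] := exists_notin_lclosure Hd (t := [:: x; p]) ltac:(have := n_ge4; simpl; lia).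
have xp : x <> p by apply: notin_lclosure_neq hx _; left.
have [yx yp] : y <> x /\ y <> p by split; apply: notin_lclosure_neq hy _; rewrite /lset /=; tauto.
have i3 := independent_cons EX (independent2 EX xp) hy.
have [b [b' [hb Xb hb' hc]]] := independent_sub_image_base i3.
have [c _ hcb] := f_joins_concurrent hb hb' hc (Xb p ltac:(rewrite /lset /=; tauto)).
exists c; apply: (f_star_extend i3 xp yp yx); apply: hcb => //; apply: Xb; rewrite /lset /=; tauto.
Qed.

Section CommonPoint.
Variable g : P -> P'.
Hypothesis Hg : forall p l, L l -> l p -> f l (g p).

Section BaseImage.
Variables (b : list P) (b' : list P').
Hypotheses (hb : list_base L n b) (hb' : list_base L' n b') (hc : f_maps_base b b').

Let ib : independent L (lset b) := list_base_independent hb.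
Let ib' : independent L' (lset b') := list_base_independent hb'.

Lemma g_base p : List.In p b -> List.In (g p) b'.
Proof.
move=> inp; have [ndb lb _] := hb.
have [x1 [x2 [ix1 ix2 x1p x2p x12]]] := NoDup_two_others ndb inp ltac:(have := n_ge4; lia).
have [u1 [v1 [iu1 iv1 uv1 e1]]] := f_join_base hb hb' hc inp ix1 (nesym x1p).
have [u2 [v2 [iu2 iv2 uv2 e2]]] := f_join_base hb hb' hc inp ix2 (nesym x2p).
apply: (independent_joins_meet HL' ib' iu1 iv1 iu2 iv2 uv1 uv2); rewrite -?e1 -?e2.
- move/(f_join_inj (nesym x1p) (nesym x2p)).
  exact: (independent_join_neq ib inp ix1 ix2 (nesym x1p) (nesym x2p) x12).
- by apply: Hg; [exact: join_line (nesym x1p)|exact: join_l].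
- by apply: Hg; [exact: join_line (nesym x2p)|exact: join_l].
Qed.

Lemma f_join_through_g p u v : List.In p b -> List.In u b -> List.In v b -> u <> v ->
  f (join u v) (g p) -> exists w, [/\ List.In w b', w <> g p & f (join u v) = join' (g p) w].
Proof.
move=> inp iu iv uv hgp.
have [u' [v' [iu' iv' uv' e]]] := f_join_base hb hb' hc iu iv uv.
rewrite e in hgp *.
by have [w [iw wc ->]] := independent_join_through ib' iu' iv' (g_base inp) uv' hgp; exists w.
Qed.

Lemma f_join_through_g_star p u v : List.In p b -> List.In u b -> List.In v b -> u <> v ->
  f (join u v) (g p) -> exists z, [/\ List.In z b, z <> p & f (join u v) = f (join p z)].
Proof.
move=> inp iu iv uv hgp; have [ndb lb _] := hb; have [ndb' lb' _] := hb'.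
have [Dp [ndDp lDp hDp]] := NoDup_remove_one ndb inp.
have [Dc [ndDc lDc hDc]] := NoDup_remove_one ndb' (g_base inp).
have hmaps z : List.In z Dp -> exists w, List.In w Dc /\ f (join p z) = join' (g p) w.
  move=> /hDp [iz zp]; have pz := nesym zp.
  have [|w [iw wp ->]] := f_join_through_g inp inp iz pz; last by exists w; split => //; apply/hDc.
  by apply: Hg; [exact: join_line|exact: join_l].
have hinj z z' w : List.In z Dp -> List.In z' Dp ->
    f (join p z) = join' (g p) w -> f (join p z') = join' (g p) w -> z = z'.
  move=> /hDp [iz zp] /hDp [iz' z'p] e1 e2; apply: contrapT => zz'.
  apply: (independent_join_neq ib inp iz iz' (nesym zp) (nesym z'p) zz').
  by apply: f_join_inj; [exact: nesym|exact: nesym|rewrite e1 e2].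
(* The lines [f (join p z)], [z] in [Dp], are [length Dp] distinct lines
   [join' (g p) w], [w] in [Dc], so they exhaust them. *)
have hlen : (length Dc <= length Dp)%coq_nat by move: lb lb' lDp lDc; lia.
have [w [iw wp ew]] := f_join_through_g inp iu iv uv hgp.
have [z [/hDp [iz zp] ez]] := NoDup_rel_surj ndDp hlen hmaps hinj (proj2 (hDc w) (conj iw wp)).
by exists z; split => //; rewrite ew ez.
Qed.

Lemma g_inj_base p x : List.In p b -> List.In x b -> p <> x -> g p <> g x.
Proof.
move=> inp inx px egx; have [ndb lb _] := hb.
have [y [iy]] :=
  NoDup_exists_notin (xs := [:: p; x]) ndb ltac:(rewrite lb /=; have := n_ge4; lia).
move=> /= /not_orP [/nesym yp /not_orP [/nesym yx _]].
have [|z [iz zp ez]] := f_join_through_g_star inp inx iy (nesym yx).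
  by rewrite egx; apply: Hg; [exact: join_line (nesym yx)|exact: join_l].
have e := f_join_inj (nesym yx) (nesym zp) ez.
by case: (independent_join_inj ib inx iy inp iz (nesym zp) e) => -[epx _]; [apply: px|apply: yp].
Qed.

End BaseImage.

Lemma g_injective p x : p <> x -> g p <> g x.
Proof.
move=> px; have [b [b' [hb Xb hb' hc]]] := independent_sub_image_base (independent2 EX (nesym px)).
by apply: (g_inj_base hb hb' hc) => //; apply: Xb; rewrite /lset /=; tauto.
Qed.

Lemma f_join_g p x : p <> x -> f (join p x) = join' (g p) (g x).
Proof.
move=> px; symmetry; apply: (line_join HL' (Hf (join_line HL px)) (g_injective px)).
  by apply: Hg; [exact: join_line|exact: join_l].
by apply: Hg; [exact: join_line|exact: join_r].
Qed.

Lemma g_collinear p q r : collinear L p q r -> collinear L' (g p) (g q) (g r).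
Proof.
by move=> [l [Ll [lp [lq lr]]]]; exists (f l); split; [exact: Hf|split; [|split]; exact: Hg].
Qed.

Lemma g_noncollinear p q r : ~ collinear L p q r -> ~ collinear L' (g p) (g q) (g r).
Proof.
move=> ncol; have [pq qr pr] := noncollinear_neq ncol.
have nr : ~ cl (lset [:: q; p]) r.
  move=> h; apply: ncol; exists (join q p); split; first exact: join_line (nesym pq).
  by split; [exact: join_r|split; [exact: join_l|]].
have i3 := independent_cons EX (independent2 EX (nesym pq)) nr.
have [b [b' [hb Xb hb' hc]]] := independent_sub_image_base i3.
have ib' := list_base_independent hb'.
have gb x : lset [:: r; q; p] x -> List.In (g x) b'.
  by move=> hx; exact (g_base hb hb' hc (Xb x hx)).
have [gp gq gr] : [/\ List.In (g p) b', List.In (g q) b' & List.In (g r) b'].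
  by split; apply: gb; rewrite /lset /=; tauto.
by apply: (independent_noncollinear HL' ib' gp gq gr); apply: g_injective => //; exact: nesym.
Qed.

Lemma g_independent X : independent L X -> independent L' (g @` X).
Proof.
move=> hX; have [b [b' [hb Xb hb' hc]]] := independent_sub_image_base hX.
have ib' := list_base_independent hb'.
by apply: independentS ib' => _ [x Xx <-]; exact (g_base hb hb' hc (Xb x Xx)).
Qed.

Lemma f_line_lclosure l : L l -> f l = lclosure L' (g @` l).
Proof.
move=> Ll; have [u [v [uv [lu lv]]]] := HL.2.1 l Ll.
apply/seteqP; split.
  by rewrite -{1}(line_join HL Ll uv lu lv) f_join_g //; apply: join_subset; [exists u|exists v].
apply: lclosure_min; first exact: (subspace_line HL' (Hf Ll)).
by move=> _ [x lx <-]; exact: Hg.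
Qed.

End CommonPoint.

End BaseSubsetMap.

Theorem theorem2p3 (P P' : Type) (L : set (set P)) (L' : set (set P')) (n : nat)
  (f : set P -> set P') :
  is_linear_space L -> is_linear_space L' ->
  (4 <= n)%N ->
  dimension L setT n -> dimension L' setT n ->
  exchange_axiom L -> exchange_axiom L' ->
  axiom_P2 L -> axiom_P2 L' ->
  (forall l, L l -> L' (f l)) ->
  (forall l1 l2, L l1 -> L l2 -> f l1 = f l2 -> l1 = l2) ->
  (forall A, is_base_subset L 1 A -> is_base_subset L' 1 (f @` A)) ->
  exists g : P -> P',
    strong_embedding L L' g /\
    (forall l, L l -> f l = lclosure L' (g @` l)).
Proof.
(* Axiom (P2) is only needed for [L]. *)
move=> HL HL' n4 Hd Hd' EX EX' HP2 _ Hf Hfi Hfb.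
have [g Hg] := choice (f_star_concurrent HL HL' n4 Hd Hd' EX EX' HP2 Hf Hfi Hfb).
exists g; split; last exact: (f_line_lclosure HL HL' n4 Hd Hd' EX EX' Hf Hfi Hfb Hg).
split.
- move=> x y gxy; apply: contrapT => xy.
  exact: (g_injective HL HL' n4 Hd Hd' EX EX' Hfi Hfb Hg xy gxy).
- exact: (g_collinear Hf Hg).
- exact: (g_noncollinear HL HL' n4 Hd Hd' EX EX' Hfi Hfb Hg).
- exact: (g_independent HL HL' n4 Hd Hd' EX EX' Hfi Hfb Hg).
Qed.
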